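(* Let $D$ be a strong nonseparable digraph and let $(D_0,D_1,\ldots,D_k)$ be an ear decomposition of $D$. Let $i\in\{1,\ldots,k\}$ and let $P_{i-1}=(x_0,x_1,\ldots,x_{r-1},x_r)$ be the ear of $D_{i-1}$ in $D$ (so $D_i=D_{i-1}\cup P_{i-1}$), with $l(P_{i-1})\geq 2$. If $D_i$ has a kernel $N$ but $D_{i-1}$ has no kernel, then one of the following holds: (1) $x_0\notin N$, $x_r\in N$ and $l(P_{i-1})$ is odd; (2) $x_0,x_r\notin N$ and $l(P_{i-1})$ is even.
   Context: All digraphs are finite, without loops or multiple arcs. Paths and cycles are directed; the length $l(P)$ of a path $P$ is its number of arcs. A digraph is strong if for every ordered pair of vertices $x,y$ there is a directed path from $x$ to $y$; it is nonseparable if its underlying undirected graph is nonseparable (has no cut vertex). For a subdigraph $H$ of $D$, an ear of $H$ in $D$ is a directed path $(x_0,\ldots,x_r)$ in $D$ whose end vertices lie in $H$ and whose internal vertices do not lie in $H$. An ear decomposition of a nonseparable strong digraph $D$ is a sequence $(D_0,\ldots,D_k)$ of nonseparable strong subdigraphs of $D$ such that $D_0$ is a directed cycle, $D_{j+1}=D_j\cup P_j$ with $P_j$ an ear of $D_j$ in $D$ for each $j\in\{0,\ldots,k-1\}$, and $D_k=D$. A kernel of a digraph is a set $N$ of vertices that is independent (no arc between two of its vertices) and absorbent (every vertex not in $N$ has an out-neighbour in $N$). *)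

From mathcomp Require Import all_boot.
Set Implicit Arguments.
Unset Strict Implicit.
Unset Printing Implicit Defensive.

(* A digraph on a finite vertex universe T is a pair (V, A) with
   V : {set T} its vertex set and A : {set T * T} its arc set. *)

Section Digraphs.
Variable T : finType.

(* arcs lie inside the vertex set; no loops (multiple arcs are excluded
   automatically since A is a set of ordered pairs). *)
Definition digraph_wf (V : {set T}) (A : {set T * T}) : Prop :=
  forall a, a \in A -> [/\ a.1 \in V, a.2 \in V & a.1 != a.2].

Definition subdigraph (V' : {set T}) (A' : {set T * T})
  (V : {set T}) (A : {set T * T}) : Prop :=
  [/\ digraph_wf V' A', V' \subset V & A' \subset A].

Definition arc_rel (A : {set T * T}) : rel T := fun x y => (x, y) \in A.

Definition strong (V : {set T}) (A : {set T * T}) : Prop :=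
  forall x y, x \in V -> y \in V -> connect (arc_rel A) x y.

Definition und_rel (W : {set T}) (A : {set T * T}) : rel T :=
  fun x y => [&& x \in W, y \in W & ((x, y) \in A) || ((y, x) \in A)].

Definition und_connected (W : {set T}) (A : {set T * T}) : Prop :=
  forall x y, x \in W -> y \in W -> connect (und_rel W A) x y.

Definition nonseparable (V : {set T}) (A : {set T * T}) : Prop :=
  und_connected V A /\ forall v, v \in V -> und_connected (V :\ v) A.

Definition is_dicycle (V : {set T}) (A : {set T * T}) : Prop :=
  exists c : seq T, [/\ uniq c, 2 <= size c, V = [set x in c] &
    A = [set a | (a.1 \in c) && (next c a.1 == a.2)]].

Definition path_arcs (p : seq T) : {set T * T} :=
  [set a in zip p (behead p)].

Definition is_ear (VH : {set T}) (A : {set T * T}) (p : seq T) : Prop :=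
  exists (x0 : T) (s : seq T),
    [/\ p = x0 :: s, 1 <= size s, uniq p & path (arc_rel A) x0 s] /\
    [/\ x0 \in VH, last x0 s \in VH &
        all (fun x => x \notin VH) (behead (belast x0 s))].

Definition ear_decomposition (V : {set T}) (A : {set T * T}) (k : nat)
  (Vs : nat -> {set T}) (As : nat -> {set T * T}) (Ps : nat -> seq T) : Prop :=
  [/\ forall j, j <= k ->
        [/\ subdigraph (Vs j) (As j) V A, nonseparable (Vs j) (As j)
          & strong (Vs j) (As j)],
      is_dicycle (Vs 0) (As 0),
      forall j, j < k ->
        [/\ is_ear (Vs j) A (Ps j),
            Vs j.+1 = Vs j :|: [set x in Ps j] &
            As j.+1 = As j :|: path_arcs (Ps j)]
    & Vs k = V /\ As k = A].

Definition is_kernel (V : {set T}) (A : {set T * T}) (N : {set T}) : Prop :=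
  [/\ N \subset V,
      forall x y, x \in N -> y \in N -> (x, y) \notin A &
      forall x, x \in V -> x \notin N -> exists2 y, y \in N & (x, y) \in A].

End Digraphs.

From mathcomp Require Import all_boot.
Set Implicit Arguments.
Unset Strict Implicit.
Unset Printing Implicit Defensive.

(* Let P = (x_0, ..., x_r) be the new ear and N a kernel of D_i.  Unless
   x_0 is outside N and x_1 is in N, the trace of N on D_{i-1} is already a
   kernel of D_{i-1}: the only arc leaving D_{i-1} towards P is (x_0, x_1).
   So x_1 is in N, and since each internal vertex x_n has x_{n+1} as its only
   out-neighbour, membership in N alternates along P: x_n is in N iff n is
   odd.  Reading this off at n = r gives the two cases. *)

Section DigraphFacts.
Variable T : finType.
Implicit Types (V : {set T}) (A : {set T * T}) (N : {set T}).

Lemma kernel_sole_successor V A N u w :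
  is_kernel V A N -> u \in V -> (u, w) \in A ->
  (forall y, (u, y) \in A -> y = w) -> (u \in N) = (w \notin N).
Proof.
move=> [_ indepN absorbN] uV uw sole_w.
have [uN | uNN] := boolP (u \in N).
  by apply/esym/negP => wN; move: (indepN _ _ uN wN); rewrite uw.
have [y yN /sole_w y_w] := absorbN u uV uNN.
by rewrite -y_w yN.
Qed.

Lemma path_arcsP (d : T) (p : seq T) a b :
  reflect (exists2 n, n.+1 < size p & (a, b) = (nth d p n, nth d p n.+1))
          ((a, b) \in path_arcs p).
Proof.
have size_arcs : size (zip p (behead p)) = (size p).-1.
  by rewrite size_zip size_behead; apply/minn_idPr/leq_pred.
rewrite inE; apply: (iffP (nthP (d, d))) => [[n lt_n <-] | [n lt_n ->]].
  rewrite size_arcs ltn_predRL in lt_n.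
  by exists n; rewrite // nth_zip_cond size_arcs ltn_predRL lt_n nth_behead.
exists n; first by rewrite size_arcs ltn_predRL.
by rewrite nth_zip_cond size_arcs ltn_predRL lt_n nth_behead.
Qed.

End DigraphFacts.

Section EarExtension.
Variables (T : finType) (VH : {set T}) (AH : {set T * T}) (x0 : T) (s : seq T).
Hypotheses (wfH : digraph_wf VH AH) (uniq_ear : uniq (x0 :: s))
  (ear_internal : all (fun v => v \notin VH) (behead (belast x0 s))).

Local Notation x n := (nth x0 (x0 :: s) n).
Local Notation VD := (VH :|: [set v in x0 :: s]).
Local Notation AD := (AH :|: path_arcs (x0 :: s)).

Lemma ear_internal_notin n : 0 < n < size s -> x n \notin VH.
Proof.
case: n => [// | n] /= lt_n; apply: (allP ear_internal).
have -> : nth x0 s n = nth x0 (rcons (belast x0 s) (last x0 s)) n.+1 by rewrite -lastI.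
rewrite nth_rcons size_belast lt_n -nth_behead.
by apply: mem_nth; rewrite size_behead size_belast ltn_predRL.
Qed.

Lemma ear_mem n : n <= size s -> x n \in VD.
Proof. by move=> le_n; rewrite in_setU inE mem_nth ?orbT. Qed.

Lemma ear_arc n : n < size s -> (x n, x n.+1) \in AD.
Proof. by move=> lt_n; rewrite in_setU; apply/orP; right; apply/path_arcsP; exists n. Qed.

Lemma ear_internal_succ n y : 0 < n < size s -> (x n, y) \in AD -> y = x n.+1.
Proof.
move=> /andP[n_gt0 lt_n].
case/setUP => [arcH | /(path_arcsP x0)[m lt_m /pair_equal_spec[xn_xm ->]]].
  have [xn_VH _ _] := wfH arcH.
  by rewrite /= (negbTE (ear_internal_notin _)) ?n_gt0 in xn_VH.
suff -> : n = m by [].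
by apply/eqP; rewrite -(nth_uniq x0 _ _ uniq_ear) ?xn_xm //= ltnW.
Qed.

Lemma ear_kernel_restrict N :
  is_kernel VD AD N -> (x0 \in N) || (x 1 \notin N) -> is_kernel VH AH (N :&: VH).
Proof.
move=> [_ indepN absorbN] x0N_or_x1NN; split; first exact: subsetIr.
  move=> u v /setIP[uN _] /setIP[vN _].
  by apply: contra (indepN u v uN vN) => arcH; rewrite in_setU arcH.
move=> v vH; rewrite inE vH andbT => vNN.
have [y yN] := absorbN v (subsetP (subsetUl _ _) v vH) vNN.
case/setUP => [arcH | /(path_arcsP x0)[n lt_n /pair_equal_spec[v_eq y_eq]]].
  by have [_ yH _] := wfH arcH; exists y; rewrite // inE yN.
subst v y; case: n lt_n vH vNN yN => [|n] lt_n xnH.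
  by move=> x0NN x1N; rewrite (negbTE x0NN) x1N in x0N_or_x1NN.
by rewrite (negbTE (ear_internal_notin _)) in xnH.
Qed.

Lemma ear_kernel_alternates N :
  is_kernel VD AD N -> x 1 \in N -> forall n, 0 < n <= size s -> (x n \in N) = odd n.
Proof.
move=> kerN x1N; elim=> [// | [// | n] IHn] /andP[_ le_n].
have := IHn (ltnW le_n).
rewrite (kernel_sole_successor kerN (ear_mem (ltnW le_n)) (ear_arc le_n)).
  by move=> alternate; rewrite [odd _]oddS -alternate negbK.
by move=> y; apply: ear_internal_succ.
Qed.

End EarExtension.

Theorem mainTheorem7 (T : finType) (V : {set T}) (A : {set (T * T)})
  (k : nat) (Vs : nat -> {set T}) (As : nat -> {set (T * T)})
  (Ps : nat -> seq T) (i : nat) (x0 : T) (s : seq T) (N : {set T}) :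
  digraph_wf V A -> strong V A -> nonseparable V A ->
  ear_decomposition V A k Vs As Ps ->
  1 <= i <= k ->
  Ps i.-1 = x0 :: s ->
  2 <= size s ->
  is_kernel (Vs i) (As i) N ->
  ~ (exists N' : {set T}, is_kernel (Vs i.-1) (As i.-1) N') ->
  (x0 \notin N /\ last x0 s \in N /\ odd (size s)) \/
  (x0 \notin N /\ last x0 s \notin N /\ ~~ odd (size s)).
Proof.
case: i => [// | j] _ _ _ [subgraphs _ ears _] /andP[_ lt_jk] /=.
move=> ear_j size_s kerN no_kernel.
have [[wf_j _ _] _ _] := subgraphs j (ltnW lt_jk).
have [[y0 [t [[ear_eq _ uniq_ear _] [_ _ internal]]]] V_ext A_ext] := ears j lt_jk.
rewrite ear_j in ear_eq uniq_ear V_ext A_ext; case: ear_eq => y0_eq t_eq; subst y0 t.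
rewrite V_ext A_ext in kerN.
have /andP[x0NN x1N] : (x0 \notin N) && (nth x0 (x0 :: s) 1 \in N).
  apply/negPn/negP; rewrite negb_and negbK => restricts.
  apply: no_kernel; exists (N :&: Vs j); exact: ear_kernel_restrict kerN restricts.
have last_in_ear : 0 < size s <= size s by rewrite leqnn ltnW.
have := ear_kernel_alternates wf_j uniq_ear internal kerN x1N last_in_ear.
rewrite -last_nth => ->.
by case: (odd (size s)); [left | right].
Qed.
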